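(* Let $F$ be a positive integer and $S\in\mathrm{Sat}(F)$. Then $S$ has a unique minimal $\mathrm{Sat}(F)$-system of generators, namely $$\{x\in S\setminus\{0\}\mid x<F\text{ and }\mathrm{d}_S(x)\neq\mathrm{d}_S(y)\text{ for all }y\in S\setminus\{0\}\text{ with }y<x\}.$$
   Context: A numerical semigroup is a subset $S\subseteq\mathbb{N}$ closed under addition, containing $0$, with $\mathbb{N}\setminus S$ finite; its Frobenius number $\mathrm{F}(S)$ is the largest integer not in $S$. For $A\subseteq\mathbb{N}$ and $a\in A$, let $\mathrm{d}_A(a)=\gcd\{x\in A\mid x\le a\}$. A numerical semigroup $S$ is saturated if $s+\mathrm{d}_S(s)\in S$ for all $s\in S\setminus\{0\}$. For a positive integer $F$, $\mathrm{Sat}(F)$ denotes the set of all saturated numerical semigroups $S$ with $\mathrm{F}(S)=F$. Let $\Delta(F+1)=\{0\}\cup\{x\in\mathbb{N}\mid x\ge F+1\}$. A set $X\subseteq\mathbb{N}$ is a $\mathrm{Sat}(F)$-set if $X\cap\Delta(F+1)=\emptyset$ and there exists $S\in\mathrm{Sat}(F)$ with $X\subseteq S$. For a $\mathrm{Sat}(F)$-set $X$, $\mathrm{Sat}(F)[X]$ denotes the intersection of all elements of $\mathrm{Sat}(F)$ containing $X$ (the smallest element of $\mathrm{Sat}(F)$ containing $X$). If $S=\mathrm{Sat}(F)[X]$, $X$ is a $\mathrm{Sat}(F)$-system of generators of $S$; it is minimal if $S\neq\mathrm{Sat}(F)[Y]$ for every proper subset $Y\subsetneq X$. *)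

From mathcomp Require Import all_boot.
Set Implicit Arguments. Unset Strict Implicit. Unset Printing Implicit Defensive.

Definition numerical_semigroup (S : pred nat) : Prop :=
  [/\ S 0, (forall x y, S x -> S y -> S (x + y)) & exists N, forall x, N <= x -> S x].

Definition frobenius (S : pred nat) (F : nat) : Prop :=
  ~~ S F /\ forall x, F < x -> S x.

Definition dgcd (A : pred nat) (a : nat) : nat :=
  \big[gcdn/0]_(0 <= x < a.+1 | A x) x.

Definition saturated (S : pred nat) : Prop :=
  forall s, S s -> s != 0 -> S (s + dgcd S s).

Definition Sat (F : nat) (S : pred nat) : Prop :=
  [/\ numerical_semigroup S, saturated S & frobenius S F].

(* X is a Sat(F)-set: X \cap Delta(F+1) = emptyset and X \subseteq S for some S in Sat(F) *)
Definition Sat_set (F : nat) (X : pred nat) : Prop :=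
  (forall x, X x -> 0 < x < F.+1) /\ exists S, Sat F S /\ {subset X <= S}.

Definition Sat_generated (F : nat) (X S : pred nat) : Prop :=
  forall x, S x <-> (forall T : pred nat, Sat F T -> {subset X <= T} -> T x).

Definition Sat_system (F : nat) (S X : pred nat) : Prop :=
  Sat_set F X /\ Sat_generated F X S.

Definition Sat_minimal_system (F : nat) (S X : pred nat) : Prop :=
  Sat_system F S X /\
  forall Y : pred nat, {subset Y <= X} -> (exists x, X x && ~~ Y x) ->
    ~ Sat_generated F Y S.

Definition msg (F : nat) (S : pred nat) : pred nat :=
  fun x => [&& S x, x != 0, x < F &
            all (fun y => (S y && (y != 0)) ==> (dgcd S x != dgcd S y)) (iota 0 x)].

From mathcomp Require Import all_boot zify.

Set Implicit Arguments.
Unset Strict Implicit.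

(* The elements of [msg F S] are exactly the x in S below F at
   which d_S drops.  Every element of S is reached by saturation from one of
   them (a saturated set contains every x >= s that d_S(s) divides), so they
   generate S.  Conversely, removing one of them, x, from S leaves a saturated
   numerical semigroup with Frobenius number F: x is not a sum of two nonzero
   elements of S, and no saturation step lands on x, because d_S(s) does not
   divide x for any nonzero s < x in S.  Hence every Sat(F)-system of
   generators of S contains [msg F S], which forces uniqueness. *)

Lemma dgcd0 (A : pred nat) : dgcd A 0 = 0.
Proof. by rewrite /dgcd big_mkcond big_nat1; case: (A 0). Qed.

Lemma dgcdS (A : pred nat) a :
  dgcd A a.+1 = gcdn (dgcd A a) (if A a.+1 then a.+1 else 0).
Proof. by rewrite /dgcd big_mkcond big_nat_recr //= -big_mkcond. Qed.

Lemma dgcd_dvdn (A : pred nat) a z : A z -> z <= a -> dgcd A a %| z.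
Proof.
move=> Az; elim: a => [|a IH]; first by rewrite leqn0 => /eqP ->; rewrite dvdn0.
rewrite dgcdS leq_eqVlt => /orP[/eqP <-|]; first by rewrite Az dvdn_gcdr.
by rewrite ltnS => /IH; apply: dvdn_trans; apply: dvdn_gcdl.
Qed.

Lemma dvdn_dgcd (A : pred nat) a D :
  (forall z, A z -> z <= a -> D %| z) -> D %| dgcd A a.
Proof.
elim: a => [|a IH] DA; first by rewrite dgcd0 dvdn0.
rewrite dgcdS dvdn_gcd IH => [|z Az za]; last by rewrite DA // ltnW.
by case Aa: (A a.+1); rewrite ?dvdn0 // DA.
Qed.

Lemma dgcd_dvdn_le (A : pred nat) x y : y <= x -> dgcd A x %| dgcd A y.
Proof.
move=> yx; apply: dvdn_dgcd => z Az zy.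
by apply: dgcd_dvdn; rewrite // (leq_trans zy).
Qed.

Lemma dgcd_subset (A B : pred nat) a :
  (forall z, A z -> B z) -> dgcd B a %| dgcd A a.
Proof. by move=> AB; apply: dvdn_dgcd => z /AB Bz za; apply: dgcd_dvdn. Qed.

Lemma eq_dgcd (A B : pred nat) a :
  (forall z, z <= a -> A z = B z) -> dgcd A a = dgcd B a.
Proof.
move=> eqAB; apply/eqP; rewrite eqn_dvd.
by apply/andP; split; apply: dvdn_dgcd => z Hz za; apply: dgcd_dvdn;
  rewrite ?eqAB // -?eqAB.
Qed.

Lemma dgcd_gt0 (A : pred nat) y : A y -> 0 < y -> 0 < dgcd A y.
Proof.
move=> Ay; have := dgcd_dvdn Ay (leqnn y).
by case: (dgcd A y) => // /[!dvd0n] /eqP ->.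
Qed.

Lemma max_mem_in_range (A : pred nat) s x : A s -> s < x ->
  exists2 y, [/\ A y, s <= y & y < x] &
    forall z, A z -> s <= z -> z < x -> z <= y.
Proof.
move=> As sx.
have ex : exists y, [&& A y, s <= y & y < x] by exists s; rewrite As leqnn sx.
have bd y : [&& A y, s <= y & y < x] -> y <= x by case/and3P => _ _ /ltnW.
case: (ex_maxnP ex bd) => y /and3P[Ay sy yx] ymax.
by exists y => // z Az sz zx; apply: ymax; rewrite Az sz zx.
Qed.

(* Repeated saturation steps from s: they move within S by multiples of
   d_S(s) and can only stop at x. *)
Lemma saturated_mem (S : pred nat) s x :
  saturated S -> S s -> 0 < s -> s <= x -> dgcd S s %| x -> S x.
Proof.
move=> satS Ss s0; rewrite leq_eqVlt => /orP[/eqP <- //|sx dx].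
have [y [Sy sy yx] ymax] := max_mem_in_range Ss sx.
have y0 : 0 < y by apply: leq_trans sy.
have Syd := satS y Sy (lt0n_neq0 y0).
have d0 := dgcd_gt0 Sy y0.
have dxy : dgcd S y %| x - y.
  apply: dvdn_sub; last exact: dgcd_dvdn.
  exact: dvdn_trans (dgcd_dvdn_le S sy) dx.
have le_dxy : dgcd S y <= x - y by apply: dvdn_leq; rewrite // subn_gt0.
case: (ltngtP (y + dgcd S y) x) => [lt_x|gt_x|<- //]; last lia.
by have := ymax _ Syd (leq_trans sy (leq_addr _ _)) lt_x; lia.
Qed.

Section MinimalGenerators.

Variables (F : nat) (S : pred nat).

Lemma msg_mem x : msg F S x -> [/\ S x, 0 < x & x < F].
Proof. by case/and4P=> Sx x0 xF _; rewrite lt0n. Qed.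

Lemma msg_dgcd_neq x y :
  msg F S x -> S y -> 0 < y -> y < x -> dgcd S x != dgcd S y.
Proof.
case/and4P=> _ _ _ /allP dx Sy y0 yx.
by have := dx y; rewrite mem_iota yx Sy -lt0n y0 => /(_ isT).
Qed.

Lemma msg_ndvdn x s :
  msg F S x -> S s -> 0 < s -> s < x -> ~~ (dgcd S s %| x).
Proof.
move=> Mx Ss s0 sx; apply/negP => dx.
have [y [Sy sy yx] ymax] := max_mem_in_range Ss sx.
have /negP := msg_dgcd_neq Mx Sy (leq_trans s0 sy) yx; apply.
rewrite eqn_dvd dgcd_dvdn_le ?(ltnW yx) //=.
apply: dvdn_dgcd => z Sz; rewrite leq_eqVlt => /orP[/eqP -> |zx].
  exact: dvdn_trans (dgcd_dvdn_le S sy) dx.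
apply: dgcd_dvdn => //; case: (leqP s z) => [sz|/ltnW zs].
- exact: ymax.
- exact: leq_trans sy.
Qed.

Lemma msg_addn_neq x a b :
  msg F S x -> S a -> S b -> 0 < a -> 0 < b -> a + b != x.
Proof.
move=> Mx Sa Sb a0 b0; apply/eqP => abx.
wlog ab : a b Sa Sb a0 b0 abx / b <= a.
  move=> Hwlog; case: (leqP b a) => [|/ltnW]; first exact: Hwlog.
  by apply: Hwlog; rewrite // addnC.
have ax : a < x by lia.
have /negP := msg_ndvdn Mx Sa a0 ax; apply.
by rewrite -abx; apply: dvdn_add; apply: dgcd_dvdn.
Qed.

Hypothesis SatS : Sat F S.

Lemma Sat_predD1_msg x : msg F S x -> Sat F (predD1 S x).
Proof.
move=> Mx; have [Sx x0 xF] := msg_mem Mx.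
have [[S0 addS [N SN]] satS [nSF SF]] := SatS.
split; [split| |split] => /=.
- by rewrite S0 andbT eq_sym -lt0n.
- move=> a b /andP[ax Sa] /andP[bx Sb]; rewrite addS // andbT.
  case: (posnP a) => [->|a0]; first by rewrite add0n.
  case: (posnP b) => [->|b0]; first by rewrite addn0.
  exact: msg_addn_neq.
- by exists (maxn N x.+1) => z zN; rewrite SN; lia.
- move=> s /andP[sx Ss] s0 /=; have s_gt0 : 0 < s by rewrite lt0n.
  case: (ltngtP s x) sx => // [lt_sx|gt_sx] _.
  + have -> : dgcd (predD1 S x) s = dgcd S s.
      by apply: eq_dgcd => z zs /=; rewrite andb_idl // => _; apply/eqP; lia.
    rewrite satS // andbT.
    apply: contraNneq (msg_ndvdn Mx Ss s_gt0 lt_sx) => <-.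
    exact: dvdn_add (dgcd_dvdn Ss (leqnn s)) (dvdnn _).
  + rewrite (saturated_mem satS Ss s_gt0 (leq_addr _ _)).
      by rewrite andbT; apply/eqP; lia.
    apply: dvdn_add; first exact: dgcd_dvdn.
    by apply: dgcd_subset => z /andP[].
- by rewrite negb_and nSF orbT.
- by move=> z Fz; rewrite SF // andbT; apply/eqP; lia.
Qed.

Lemma msg_witness x : S x -> 0 < x -> x < F ->
  exists2 m, msg F S m & m <= x /\ dgcd S m = dgcd S x.
Proof.
move=> Sx x0 xF.
have ex : exists m, [&& S m, m != 0 & dgcd S m == dgcd S x].
  by exists x; rewrite Sx -lt0n x0 eqxx.
case: (ex_minnP ex) => m /and3P[Sm m0 /eqP dm] mmin.
have mx : m <= x by apply: mmin; rewrite Sx -lt0n x0 eqxx.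
exists m => //; rewrite /msg Sm m0 (leq_ltn_trans mx xF) /=.
apply/allP => y; rewrite mem_iota /= => ym; apply/implyP => /andP[Sy y0].
apply: contraTneq ym => dy; rewrite -leqNgt mmin // Sy y0 /=.
by rewrite -dy dm.
Qed.

Lemma dvdn_mem_below_msg a D : a < F ->
  (forall w, msg F S w -> w <= a -> D %| w) ->
  forall z, S z -> z <= a -> D %| z.
Proof.
move=> aF Dmsg z; elim/ltn_ind: z => z IH Sz za.
case: (posnP z) => [->|z0]; first exact: dvdn0.
have [m Mm [mz dm]] := msg_witness Sz z0 (leq_ltn_trans za aF).
case: (ltngtP m z) mz => [lt_mz _|//|eq_mz _]; last by subst m; apply: Dmsg.
apply: dvdn_trans (dgcd_dvdn Sz (leqnn z)); rewrite -dm.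
by apply: dvdn_dgcd => w Sw wm; apply: IH => //; lia.
Qed.

Lemma msg_subset_Sat (T : pred nat) :
  Sat F T -> (forall w, msg F S w -> T w) -> forall x, S x -> T x.
Proof.
move=> [[T0 _ _] satT [_ TF]] MT x Sx.
have [_ _ [nSF _]] := SatS.
case: (ltngtP x F) => [xF|/TF //|eF]; last by rewrite -eF Sx in nSF.
case: (posnP x) => [-> //|x0].
have [m Mm [mx dm]] := msg_witness Sx x0 xF.
have [_ m0 mF] := msg_mem Mm.
apply: (saturated_mem satT (MT m Mm) m0 mx).
apply: dvdn_trans (_ : dgcd S m %| x); last by rewrite dm dgcd_dvdn.
apply: dvdn_dgcd; apply: dvdn_mem_below_msg => // w Mw wm.
exact: dgcd_dvdn (MT w Mw) wm.
Qed.

Lemma msg_Sat_generated : Sat_generated F (msg F S) S.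
Proof.
move=> x; split=> [Sx T SatT MT|]; last first.
  by apply; last by move=> w; rewrite !unfold_in => /msg_mem[].
by apply: msg_subset_Sat => // w Mw; apply: MT; rewrite unfold_in.
Qed.

Lemma Sat_generated_mem_msg (X : pred nat) x :
  Sat_generated F X S -> msg F S x -> X x.
Proof.
move=> genX Mx; apply/negPn/negP => nXx.
have [Sx _ _] := msg_mem Mx.
have sub : {subset X <= predD1 S x}.
  move=> y Xy; rewrite inE /=; apply/andP; split.
    by apply: contraNneq nXx => <-.
  by apply/(genX y) => T _ XT; exact: XT.
by have := (genX x).1 Sx _ (Sat_predD1_msg Mx) sub; rewrite /= eqxx.
Qed.

End MinimalGenerators.

Theorem proposition41 (F : nat) (S : pred nat) :
  0 < F -> Sat F S ->
  Sat_minimal_system F S (msg F S) /\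
  (forall X : pred nat, Sat_minimal_system F S X -> X =1 msg F S).
Proof.
move=> _ SatS; split.
- split; first split; first split.
  + by move=> y /msg_mem[_ y0 yF]; rewrite y0 ltnW.
  + by exists S; split => // y; rewrite !unfold_in => /msg_mem[].
  + exact: msg_Sat_generated.
  + move=> Y _ [x /andP[Mx nYx]] genY.
    by rewrite (Sat_generated_mem_msg SatS genY Mx) in nYx.
- move=> X [[_ genX] minX] x; apply/idP/idP => [Xx|]; last first.
    exact: Sat_generated_mem_msg.
  apply/negPn/negP => nMx; apply: (minX (msg F S)).
  + by move=> y; rewrite !unfold_in; apply: Sat_generated_mem_msg.
  + by exists x; rewrite Xx.
  + exact: msg_Sat_generated.
Qed.
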